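(* Let $\vec\Sigma$ be a finite sequence of finite connected tight labeled graphs over $\mathcal B$ and let $\alpha$ be an elementary Whitehead automorphism of $F(\mathcal B)$ with distinguished label $b$. For each edge $e$ of $\vec\Sigma$ whose label $c$ is not in $\{b,b^{-1}\}$, the path $\alpha(e)$ in $\alpha\vec\Sigma$ contains exactly one subedge labeled $c$; let $e'$ denote its image in $\mathrm{tight}(\alpha\vec\Sigma)$. Then $e\mapsto e'$ is a bijection from the edges of $\vec\Sigma$ not labeled $b^{\pm1}$ to the edges of $\mathrm{tight}(\alpha\vec\Sigma)$ not labeled $b^{\pm1}$. (More precisely, after collapsing all edges labeled $b^{\pm 1}$ in $\vec\Sigma$ and in $\mathrm{tight}(\alpha\vec\Sigma)$, the induced map between the collapsed graphs is an isomorphism.)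
   Context: $F(\mathcal B)$ is the free group on the finite set $\mathcal B$. A labeled graph assigns labels in $\mathcal B^{\pm1}$ to oriented edges, $e^{-1}$ carrying the inverse label; it is tight if distinct oriented edges with the same initial vertex have distinct labels. Folding identifies two distinct oriented edges with common initial vertex and the same label; $\mathrm{tight}(\Sigma)$ is the tight labeled graph obtained from a finite $\Sigma$ by iterated folding (it is well defined), with the quotient map $\Sigma\to\mathrm{tight}(\Sigma)$. For $\alpha\in\mathrm{Aut}(F(\mathcal B))$, $\alpha\Sigma$ is obtained by replacing each oriented edge labeled $c$ by a path spelling the reduced word $\alpha(c)$. Operations on sequences are applied componentwise. An elementary Whitehead automorphism is either an automorphism induced by a permutation $\pi$ of $\mathcal B^{\pm1}$ with $\pi(c^{-1})=\pi(c)^{-1}$, or is determined by $b\in\mathcal B^{\pm1}$ (the distinguished label) and $A\subset\mathcal B^{\pm1}\setminus\{b,b^{-1}\}$ via $\alpha(b)=b$ and $\alpha(c)=b^{\epsilon(c)}\,c\,b^{-\epsilon(c^{-1})}$ for $c\in\mathcal B^{\pm1}\setminus\{b^{\pm1}\}$, where $\epsilon(x)=1$ if $x\in A$ and $0$ otherwise. *)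

From mathcomp Require Import all_boot all_order.
Set Implicit Arguments. Unset Strict Implicit. Unset Printing Implicit Defensive.

(* Signed letters B^{+-1}: (c, true) is c, (c, false) is c^{-1}.             *)
Definition linv {B : Type} (x : B * bool) : B * bool := (x.1, ~~ x.2).

(* Labeled graphs (Serre convention): a finite set of vertices, a finite set *)
(* of ORIENTED edges with an origin map and an edge-reversal map einv        *)
(* (e^{-1}), and a label in B^{+-1} on every oriented edge.  The terminus of *)
Record lgraph (B : Type) := LGraph {
  vtx : finType;
  edg : finType;
  orig : edg -> vtx;
  einv : edg -> edg;
  lab : edg -> B * bool }.
Arguments LGraph {B vtx edg}.
Arguments orig {B G} : rename.
Arguments einv {B G} : rename.
Arguments lab {B G} : rename.

Definition term {B} {G : lgraph B} (e : edg G) : vtx G := orig (einv e).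

Definition wf {B} (G : lgraph B) : Prop :=
  involutive (@einv B G) /\ forall e : edg G, lab (einv e) = linv (lab e).

Definition tight {B} (G : lgraph B) : Prop :=
  forall e1 e2 : edg G, orig e1 = orig e2 -> lab e1 = lab e2 -> e1 = e2.

Definition adjacent {B} (G : lgraph B) : rel (vtx G) :=
  fun u v => [exists e : edg G, (orig e == u) && (term e == v)].

Definition badjacent {B : eqType} (b : B) (G : lgraph B) : rel (vtx G) :=
  fun u v => [exists e : edg G, [&& orig e == u, term e == v & (lab e).1 == b]].
Arguments adjacent {B} G.
Arguments badjacent {B} b G.
Definition bconn {B : eqType} (b : B) (G : lgraph B) : rel (vtx G) :=
  connect (badjacent b G).

Arguments bconn {B} b G.

Definition is_morphism {B} (G H : lgraph B)
    (fv : vtx G -> vtx H) (fe : edg G -> edg H) : Prop :=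
  (forall e, fv (orig e) = orig (fe e)) /\
  (forall e, fe (einv e) = einv (fe e)) /\
  (forall e, lab (fe e) = lab e).

Definition is_fold {B} (G H : lgraph B)
    (fv : vtx G -> vtx H) (fe : edg G -> edg H) : Prop :=
  is_morphism fv fe /\ (forall y, exists x, fv x = y) /\ (forall f, exists e, fe e = f) /\
  exists e1 e2 : edg G,
    [/\ e1 <> e2, orig e1 = orig e2, lab e1 = lab e2,
     (forall x y, fe x = fe y <->
        x = y \/ (x = e1 /\ y = e2) \/ (x = e2 /\ y = e1) \/
        (x = einv e1 /\ y = einv e2) \/ (x = einv e2 /\ y = einv e1)) &
     (forall u v, fv u = fv v <->
        [\/ u = v, (u = term e1 /\ v = term e2) | (u = term e2 /\ v = term e1)])].

Inductive folds {B} : forall G H : lgraph B,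
    (vtx G -> vtx H) -> (edg G -> edg H) -> Prop :=
  | folds_refl (G : lgraph B) : folds (fun v : vtx G => v) (fun e : edg G => e)
  | folds_step (G H K : lgraph B) (fv : vtx G -> vtx H) (fe : edg G -> edg H)
      (gv : vtx H -> vtx K) (ge : edg H -> edg K) :
      is_fold fv fe -> folds gv ge ->
      folds (fun v => gv (fv v)) (fun e => ge (fe e)).

(* Substitution graph: every oriented edge e labeled x is replaced by a path *)
(* spelling the word w x.  Oriented edges of the new graph are pairs (e, i), *)
(* i < |w (lab e)|, the i-th edge of the path of e; its inverse is the      *)
(* (|w|-1-i)-th edge of the path of e^{-1}.  Interior vertices of paths are  *)
(* indexed by (e, i), 0 < i < |w (lab e)|, with e positively labeled.        *)
(* Valid for words of length at most N.+1 (and, as usual, nonempty words;   *)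
(* w must satisfy w (x^{-1}) = (w x)^{-1}).                                  *)
Section Subst.
Variables (B : finType) (N : nat) (w : B * bool -> seq (B * bool)) (G : lgraph B).

Definition slen (e : edg G) : nat := size (w (lab e)).

Definition sedge : finType :=
  {p : edg G * 'I_N.+1 | p.2 < size (w (lab p.1))}.
Definition ivtx : finType :=
  {p : edg G * 'I_N.+1 | (lab p.1).2 && (0 < p.2 < size (w (lab p.1)))}.
Definition svtx : finType := (vtx G + ivtx)%type.

Definition spos (e : edg G) (i : nat) : svtx :=
  if i == 0 then inl (orig e)
  else if slen e <= i then inl (term e)
  else if (lab e).2 then
    match @insub _ _ ivtx (e, inord i) with Some v => inr v | None => inl (orig e) end
  else
    match @insub _ _ ivtx (einv e, inord (slen e - i)) with
    | Some v => inr v | None => inl (orig e) end.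

Definition sorig (s : sedge) : svtx := spos (val s).1 (val s).2.
Definition sinv (s : sedge) : sedge :=
  odflt s (@insub _ _ sedge (einv (val s).1, inord (slen (val s).1 - (val s).2).-1)).
Definition slab (s : sedge) : B * bool :=
  nth (lab (val s).1) (w (lab (val s).1)) (val s).2.

Definition subst_graph : lgraph B := LGraph sorig sinv slab.

Definition sbase (s : edg subst_graph) : edg G := (val (s : sedge)).1.
Definition sbase_vtx (v : vtx G) : vtx subst_graph := (inl v : svtx).

End Subst.

(* Elementary Whitehead automorphism of the second kind, determined by the  *)
(* distinguished letter b and A \subset B^{+-1} \ {b, b^{-1}}:               *)
(*   alpha(b^{+-1}) = b^{+-1},  alpha(c) = b^{eps(c)} c b^{-eps(c^{-1})}.     *)
(* wh_word b A c is the reduced word alpha(c).                               *)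
Definition wh_word {B : finType} (b : B) (A : {set B * bool}) (x : B * bool)
  : seq (B * bool) :=
  if x.1 == b then [:: x]
  else (if x \in A then [:: (b, true)] else [::]) ++
       x :: (if linv x \in A then [:: (b, false)] else [::]).

(* alpha Sigma for this Whitehead automorphism (all words have length <= 3) *)
Definition wh_graph {B : finType} (b : B) (A : {set B * bool}) (G : lgraph B)
  : lgraph B := subst_graph 2 (wh_word b A) G.

From mathcomp Require Import all_boot all_order.
From mathcomp Require Import zify.
Set Implicit Arguments. Unset Strict Implicit. Unset Printing Implicit Defensive.

(* The only letter of alpha(c) outside b^{+-1} is c itself, so the edges of
   alpha Sigma not labelled b^{+-1} are exactly the subedges e' of the paths
   alpha(e), one for each such edge e of Sigma; folding only merges edges, so
   every non-b edge of tight(alpha Sigma) is the image of some e'.  To see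
   that folding merges no two of them and creates no new b-connections, map
   alpha Sigma to an explicit tight graph T: Sigma with a b-edge leaving
   every vertex u (the one of Sigma if there is one, a new edge otherwise),
   in which an edge labelled c is attached at the end of the b-edge leaving
   its origin when c is in A, and dually at its terminus when c^{-1} is in A.
   The map sends e' to e, and b-paths of T project to b-paths of Sigma.
   Since T is tight, it factors through every folding of alpha Sigma, in
   particular through tight(alpha Sigma). *)

Lemma linvK {B : Type} : involutive (@linv B).
Proof. by case=> ? []. Qed.

Section WellFormed.
Variables (B : Type) (G : lgraph B).
Hypothesis wfG : wf G.

Lemma einvK : involutive (@einv B G). Proof. by case: wfG. Qed.

Lemma lab_einv (e : edg G) : lab (einv e) = linv (lab e). Proof. by case: wfG. Qed.

Lemma term_einv (e : edg G) : term (einv e) = orig e.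
Proof. by rewrite /term einvK. Qed.

End WellFormed.

Section Morphisms.
Variable B : Type.
Implicit Types G H T : lgraph B.

Lemma morphism_comp G H K (fv : vtx G -> vtx H) fe (gv : vtx H -> vtx K) ge :
  is_morphism fv fe -> is_morphism gv ge ->
  is_morphism (fun x => gv (fv x)) (fun e => ge (fe e)).
Proof.
move=> [fo [fi fl]] [go [gi gl]]; split; [|split] => e /=.
- by rewrite fo go.
- by rewrite fi gi.
- by rewrite gl fl.
Qed.

Lemma folds_morphism G H qv qe : @folds B G H qv qe -> is_morphism qv qe.
Proof.
elim=> {G H qv qe} [G|G H K fv fe gv ge [fM _] _]; first by split; [|split].
exact: morphism_comp.
Qed.

Lemma folds_onto G H qv qe : @folds B G H qv qe ->
  (forall y, exists x, qv x = y) /\ (forall f, exists e, qe e = f).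
Proof.
elim=> {G H qv qe} [G|G H K fv fe gv ge [_ [fv_onto [fe_onto _]]] _ [gv_onto ge_onto]].
  by split=> y; exists y.
split=> y.
  by have [x <-] := gv_onto y; have [z <-] := fv_onto x; exists z.
by have [x <-] := ge_onto y; have [z <-] := fe_onto x; exists z.
Qed.

Lemma fold_factor G H T fv fe (pv : vtx G -> vtx T) pe :
  is_fold (H := H) fv fe -> tight T -> is_morphism pv pe ->
  exists rv re, [/\ is_morphism rv re, forall x, rv (fv x) = pv x
                  & forall e, re (fe e) = pe e].
Proof.
move=> [[fo [fi fl]] [fv_onto [fe_onto [e1 [e2 [_ o12 l12 fe_eq fv_eq]]]]]] tT [po [pi pl]].
have pe12 : pe e1 = pe e2 by apply: tT; rewrite ?pl // -po o12 po.
have pe_fe x y : fe x = fe y -> pe x = pe y.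
  by move/fe_eq => [->|[[->->]|[[->->]|[[->->]|[->->]]]]] //; rewrite !pi pe12.
have pv_fv x y : fv x = fv y -> pv x = pv y.
  by move/fv_eq => [->//|[->->]|[->->]]; rewrite /term !po !pi pe12.
have fv_onto' y : exists x, fv x == y by have [x <-] := fv_onto y; exists x.
have fe_onto' y : exists x, fe x == y by have [x <-] := fe_onto y; exists x.
pose rv y := pv (xchoose (fv_onto' y)); pose re y := pe (xchoose (fe_onto' y)).
have rvE x : rv (fv x) = pv x by apply/pv_fv/eqP/(xchooseP (fv_onto' (fv x))).
have reE x : re (fe x) = pe x by apply/pe_fe/eqP/(xchooseP (fe_onto' (fe x))).
exists rv, re; split=> //; split; [|split] => y; have [x <-] := fe_onto y.
- by rewrite -fo rvE reE po.
- by rewrite -fi !reE pi.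
- by rewrite reE pl fl.
Qed.

Lemma folds_factor G H T qv qe (pv : vtx G -> vtx T) pe :
  @folds B G H qv qe -> tight T -> is_morphism pv pe ->
  exists rv re, [/\ is_morphism rv re, forall x, rv (qv x) = pv x
                  & forall e, re (qe e) = pe e].
Proof.
move=> qf tT; elim: qf T pv pe tT => {G H qv qe} [G|G H K fv fe gv ge fF _ IH] T pv pe tT pM.
  by exists pv, pe.
have [rv [re [rM rvE reE]]] := fold_factor fF tT pM.
have [sv [se [sM svE seE]]] := IH T rv re tT rM.
by exists sv, se; split=> // x; rewrite ?svE ?seE.
Qed.

End Morphisms.

Lemma homo_connect (T1 T2 : finType) (e1 : rel T1) (e2 : rel T2) (h : T1 -> T2) :
  (forall x y, e1 x y -> connect e2 (h x) (h y)) ->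
  forall x y, connect e1 x y -> connect e2 (h x) (h y).
Proof.
move=> he x y /connectP [p p_path ->]; elim: p x p_path => [|z p IHp] x /=.
  by rewrite connect0.
by case/andP=> /he xz /IHp; apply: connect_trans.
Qed.

Lemma morphism_bconn {B : eqType} (b : B) (G H : lgraph B) fv fe :
  is_morphism (G := G) (H := H) fv fe ->
  forall x y, bconn b G x y -> bconn b H (fv x) (fv y).
Proof.
move=> [fo [fi fl]]; apply: homo_connect => x y /existsP [e /and3P [/eqP <- /eqP <- eb]].
by apply/connect1/existsP; exists (fe e); rewrite fo /term -fi fo fl eb !eqxx.
Qed.

Definition subst_lengths {B : Type} (N : nat) (w : B * bool -> seq (B * bool)) :=
  forall x, [/\ 0 < size (w x), size (w x) <= N.+1 & size (w (linv x)) = size (w x)].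

Section SubstGraph.
Variables (B : finType) (N : nat) (w : B * bool -> seq (B * bool)) (G : lgraph B).
Hypotheses (wfG : wf G) (w_ok : subst_lengths N w).

Let size_w_gt0 x : 0 < size (w x). Proof. by case: (w_ok x). Qed.
Let size_w_le x : size (w x) <= N.+1. Proof. by case: (w_ok x). Qed.
Let size_w_linv x : size (w (linv x)) = size (w x). Proof. by case: (w_ok x). Qed.

Local Notation sG := (subst_graph N w G).
Local Notation sl := (slen w (G := G)).
Local Notation pos := (spos N w (G := G)).
Implicit Type e : edg G.

Lemma slen_einv e : sl (einv e) = sl e.
Proof. by rewrite /slen lab_einv. Qed.

Lemma spos_slen e : pos e (sl e) = inl (term e).
Proof.
rewrite /spos leqnn; case: eqP => // sl0.
by have := size_w_gt0 (lab e); rewrite -/(sl e) sl0.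
Qed.

Lemma spos_einv e i : i <= sl e -> pos (einv e) (sl e - i) = pos e i.
Proof.
move=> le_i; have := size_w_gt0 (lab e); have := size_w_le (lab e).
rewrite -/(sl e) => sl_le sl_gt0.
rewrite /spos slen_einv term_einv //; case: (posnP i) => [->|i_gt0].
  by rewrite subn0 leqnn; case: eqP => //; lia.
have [->|ne_i] := eqVneq i (sl e); first by rewrite subnn eqxx leqnn.
have -> : (sl e - i == 0) = false by lia.
have -> : (sl e <= sl e - i) = false by lia.
have -> : (sl e <= i) = false by lia.
rewrite lab_einv // einvK // subKn //=.
case pos_e: (lab e).2 => //=; case: insubP => [u _ _|] //=.
all: rewrite ?lab_einv //= ?pos_e inordK ?size_w_linv -?/(sl e); lia.
Qed.

Lemma spos_ivtx (v : ivtx N w G) : pos (val v).1 (val v).2 = inr v.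
Proof.
case: v => [[e i] /= v_ok]; have /and3P [pos_e i_gt0 lt_i] := v_ok.
rewrite /spos pos_e -/(sl e) in lt_i *.
have -> : (i == 0 :> nat) = false by lia.
case: insubP => [u _ Eu|]; last by rewrite inord_val v_ok.
by rewrite leqNgt lt_i /=; congr inr; apply: val_inj; rewrite Eu /= inord_val.
Qed.

Lemma spos_ivtxP e i : (lab e).2 -> 0 < i < sl e ->
  exists v : ivtx N w G, pos e i = inr v /\ val v = (e, inord i).
Proof.
move=> pos_e /andP [i_gt0 lt_i]; rewrite /spos pos_e -[i == 0]negbK -lt0n i_gt0 leqNgt lt_i /=.
have le_i_N : i < N.+1 by apply: leq_trans lt_i (size_w_le _).
by case: insubP => [v _ val_v|]; [exists v | rewrite /= pos_e inordK // i_gt0 lt_i].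
Qed.

Lemma val_sinv (s : sedge N w G) :
  val (sinv s) = (einv (val s).1, inord (sl (val s).1 - (val s).2).-1).
Proof.
rewrite /sinv; case: insubP => [u _ -> //|]; case: s => [[e i] /= lt_i].
have := size_w_le (lab e); rewrite -/(sl e) in lt_i * => sl_le.
by rewrite inordK; [rewrite -/(slen w (einv e)) slen_einv; lia | lia].
Qed.

Lemma term_sedge (s : edg sG) : term s = pos (sbase s) (val (s : sedge N w G)).2.+1.
Proof.
rewrite /term /= /sorig val_sinv /sbase; case: s => [[e i] /= lt_i].
have := size_w_le (lab e); rewrite -/(sl e) in lt_i * => sl_le.
by rewrite inordK -?subnS ?spos_einv //; lia.
Qed.

Lemma subst_edge_subproof e i (lt_i : i < sl e) : (inord i : 'I_N.+1) < size (w (lab e)).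
Proof. by rewrite inordK // (leq_trans lt_i) ?size_w_le. Qed.

Definition subst_edge e i (lt_i : i < sl e) : edg sG :=
  exist _ (e, inord i) (subst_edge_subproof lt_i).

Lemma eq_subst_edge e i j (lt_i : i < sl e) (lt_j : j < sl e) :
  i = j -> subst_edge lt_i = subst_edge lt_j.
Proof. by move=> eq_ij; apply: val_inj; rewrite /= eq_ij. Qed.

Lemma subst_edge_ind (P : edg sG -> Prop) :
  (forall e i (lt_i : i < sl e), P (subst_edge lt_i)) -> forall s, P s.
Proof.
move=> Psubst [[e i] lt_i]; have -> : exist _ (e, i) lt_i = subst_edge lt_i.
  by apply: val_inj; rewrite /= inord_val.
exact: Psubst.
Qed.

Section SubstEdge.
Variables (e : edg G) (i : nat) (lt_i : i < sl e).

Let le_i_N : i < N.+1.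
Proof. exact: leq_trans lt_i (size_w_le _). Qed.

Lemma orig_subst_edge : orig (subst_edge lt_i) = pos e i.
Proof. by rewrite /= /sorig /= inordK. Qed.

Lemma term_subst_edge : term (subst_edge lt_i) = pos e i.+1.
Proof. by rewrite term_sedge /= inordK. Qed.

Lemma lab_subst_edge : lab (subst_edge lt_i) = nth (lab e) (w (lab e)) i.
Proof. by rewrite /= /slab /= inordK. Qed.

Lemma einv_subst_edge (lt_j : (sl e - i).-1 < sl (einv e)) :
  einv (subst_edge lt_i) = subst_edge lt_j.
Proof. by apply: val_inj; rewrite /= val_sinv /= inordK. Qed.

Lemma subst_edge_badjacent (b : B) : (nth (lab e) (w (lab e)) i).1 == b ->
  badjacent b sG (pos e i) (pos e i.+1).
Proof.
move=> ib; apply/existsP; exists (subst_edge lt_i).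
by rewrite orig_subst_edge term_subst_edge lab_subst_edge ib !eqxx.
Qed.

End SubstEdge.

End SubstGraph.

Section WhiteheadWord.
Variables (B : finType) (b : B) (A : {set B * bool}).
Hypothesis A_not_b : forall x, x \in A -> x.1 != b.
Local Notation w := (wh_word b A).
Implicit Type x : B * bool.

Definition wh_prefix x : nat := x \in A.

Lemma wh_prefix_le1 x : wh_prefix x <= 1.
Proof. by rewrite /wh_prefix; case: (_ \in A). Qed.

Lemma b_notin_A x : x.1 == b -> (x \in A) = false.
Proof. by move=> xb; apply: contraTF xb => /A_not_b /negPf ->. Qed.

Lemma wh_prefix_b x : x.1 == b -> wh_prefix x = 0.
Proof. by move=> /b_notin_A; rewrite /wh_prefix => ->. Qed.

Lemma size_wh_word x :
  size (w x) = if x.1 == b then 1 else (wh_prefix x + wh_prefix (linv x)).+1.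
Proof.
by rewrite /wh_word /wh_prefix; case: eqP => // _; case: (x \in A); case: (linv x \in A).
Qed.

Lemma wh_word_lengths : subst_lengths 2 w.
Proof.
move=> x; rewrite !size_wh_word /= linvK (addnC (wh_prefix (linv x))).
case: ifP => // _; have := wh_prefix_le1 x; have := wh_prefix_le1 (linv x).
by split; lia.
Qed.

Lemma wh_prefix_lt x : wh_prefix x < size (w x).
Proof. by rewrite size_wh_word; case: ifP => [/wh_prefix_b ->|] //; lia. Qed.

Lemma nth_wh_word_prefix x : nth x (w x) (wh_prefix x) = x.
Proof.
rewrite /wh_word; case: ifP => [xb|_]; first by rewrite wh_prefix_b.
by rewrite /wh_prefix; case: (x \in A).
Qed.

Lemma nth_wh_word_b x i : i < size (w x) ->
  ((nth x (w x) i).1 == b) = (x.1 == b) || (i != wh_prefix x).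
Proof.
rewrite /wh_word /wh_prefix; case: eqP => [xb | /eqP /negPf xb].
  by case: i => //= _; rewrite xb eqxx.
by case: (x \in A); case: (linv x \in A); case: i => [|[|[|i]]] //=; rewrite ?eqxx ?xb.
Qed.

End WhiteheadWord.

Section WhiteheadModel.
Variables (B : finType) (S : lgraph B) (b : B) (A : {set B * bool}).
Hypotheses (wfS : wf S) (tS : tight S) (A_not_b : forall x, x \in A -> x.1 != b).

Local Notation w := (wh_word b A).
Local Notation sl := (slen w (G := S)).
Local Notation pos := (spos 2 w (G := S)).
Local Notation pre e := (wh_prefix A (lab e)).
Local Notation suf e := (wh_prefix A (linv (lab e))).
Implicit Type e : edg S.

Lemma slen_wh_word e : sl e = if (lab e).1 == b then 1 else (pre e + suf e).+1.
Proof. exact: size_wh_word. Qed.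

Lemma wh_prefix_einv e : pre (einv e) = suf e.
Proof. by rewrite lab_einv. Qed.

Definition b_edge (u : vtx S) : option (edg S) :=
  [pick g | (orig g == u) && (lab g == (b, true))].

(* [inr u] is the end of the new b-edge [inr (u, true)] leaving [u]; when [u]
   already has a b-edge in Sigma, [inr u] carries an unused isolated loop. *)
Definition model_vtx : finType := (vtx S + vtx S)%type.
Definition model_edg : finType := (edg S + (vtx S * bool))%type.

Definition b_end (u : vtx S) : model_vtx :=
  if b_edge u is Some g then inl (term g) else inr u.

Definition model_orig (x : model_edg) : model_vtx :=
  match x with
  | inl e => if lab e \in A then b_end (orig e) else inl (orig e)
  | inr (u, s) => if b_edge u is Some _ then inr u else if s then inl u else inr u
  end.

Definition model_einv (x : model_edg) : model_edg :=
  match x with inl e => inl (einv e) | inr (u, s) => inr (u, ~~ s) end.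

Definition model_lab (x : model_edg) : B * bool :=
  match x with inl e => lab e | inr (_, s) => (b, s) end.

Definition wh_model : lgraph B := LGraph model_orig model_einv model_lab.

Definition model_base (x : model_vtx) : vtx S :=
  match x with inl u => u | inr u => u end.

Definition model_b_edge u : model_edg :=
  if b_edge u is Some g then inl g else inr (u, true).

Lemma b_edgeP u :
  (exists g, [/\ b_edge u = Some g, orig g = u & lab g = (b, true)]) \/
  (b_edge u = None /\ forall g, orig g = u -> lab g <> (b, true)).
Proof.
rewrite /b_edge; case: pickP => [g /andP [/eqP og /eqP lg]|none_g]; first by left; exists g.
by right; split=> // g og lg; move: (none_g g); rewrite og lg !eqxx.
Qed.

Lemma b_end_inj : injective b_end.
Proof.
move=> u1 u2; rewrite /b_end.
have [[g1 [-> <- l1]]|[-> _]] := b_edgeP u1;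
  have [[g2 [-> <- l2]]|[-> _]] := b_edgeP u2 => //; last by case.
case=> t12; rewrite -(einvK wfS g1) -(einvK wfS g2); congr orig; congr einv.
by apply: tS; rewrite ?lab_einv // ?l1 ?l2.
Qed.

Lemma model_base_orig_inr u s : model_base (model_orig (inr (u, s))) = u.
Proof. by rewrite /=; case: (b_edge u) => [?|] //; case: s. Qed.

Lemma wh_model_tight : tight wh_model.
Proof.
case=> [e1|[u1 s1]] [e2|[u2 s2]] /=.
- move=> o12 l12; congr inl; apply: tS => //; rewrite -l12 in o12.
  by case: (lab e1 \in A) o12 => [/b_end_inj|[]].
- move=> o12 l12; rewrite (b_notin_A A_not_b) ?l12 ?eqxx // in o12.
  have [[g [bg _]]|[bg no_b]] := b_edgeP u2; rewrite bg // in o12.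
  by case: s2 l12 o12 => // l12 [/no_b].
- move=> o12 l12; rewrite (b_notin_A A_not_b) -?l12 ?eqxx // in o12.
  have [[g [bg _]]|[bg no_b]] := b_edgeP u1; rewrite bg // in o12.
  by case: s1 l12 o12 => // /esym l12 [/esym /no_b].
- move=> o12 [s12]; have := f_equal model_base o12.
  by rewrite !model_base_orig_inr => ->; rewrite s12.
Qed.

Let w_ok : subst_lengths 2 w := wh_word_lengths b A.

Lemma orig_model_b_edge u : model_orig (model_b_edge u) = inl u.
Proof.
rewrite /model_b_edge; have [[g [bg og lg]]|[bg _]] := b_edgeP u; rewrite bg /= ?bg //.
by rewrite (b_notin_A A_not_b) ?lg ?og //= eqxx.
Qed.

Lemma orig_model_b_edge_inv u : model_orig (model_einv (model_b_edge u)) = b_end u.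
Proof.
rewrite /model_b_edge /b_end; have [[g [bg og lg]]|[bg _]] := b_edgeP u; rewrite bg /= ?bg //.
by rewrite (b_notin_A A_not_b) // (lab_einv wfS) lg /= eqxx.
Qed.

Lemma lab_model_b_edge u : model_lab (model_b_edge u) = (b, true).
Proof. by rewrite /model_b_edge; have [[g [-> _ lg]]|[-> _]] := b_edgeP u. Qed.

Lemma lab_model_b_edge_inv u : model_lab (model_einv (model_b_edge u)) = (b, false).
Proof.
by rewrite /model_b_edge; have [[g [-> _ lg]]|[-> _]] := b_edgeP u; rewrite //= lab_einv ?lg.
Qed.

(* alpha(e) = b^eps c b^-eps' runs along the b-edge leaving [orig e], then
   along [e], then back along the b-edge leaving [term e]. *)
Definition model_spos e (i : nat) : model_vtx :=
  if i == 0 then inl (orig e) else if sl e <= i then inl (term e)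
  else if (i == 1) && (lab e \in A) then b_end (orig e) else b_end (term e).

Definition model_sedge e (i : nat) : model_edg :=
  if i == pre e then inl e else if i < pre e then model_b_edge (orig e)
  else model_einv (model_b_edge (term e)).

Definition model_vmap (x : svtx 2 w S) : model_vtx :=
  match x with inl v => inl v | inr v => model_spos (val v).1 (val v).2 end.

Definition model_emap (s : sedge 2 w S) : model_edg := model_sedge (val s).1 (val s).2.

Lemma model_spos_einv e i : i <= sl e -> model_spos (einv e) (sl e - i) = model_spos e i.
Proof.
rewrite /model_spos (slen_einv wfS w_ok) (term_einv wfS) (lab_einv wfS) slen_wh_word /wh_prefix.
by case: eqP; case: (lab e \in A); case: (linv (lab e) \in A); case: i => [|[|[|[|i]]]].
Qed.

Lemma model_vmap_spos e i : i <= sl e -> model_vmap (pos e i) = model_spos e i.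
Proof.
have sl_le3 : sl e <= 3 by case: (w_ok (lab e)).
move=> le_i; case: (posnP i) => [->|i_gt0] //.
have [eq_i|ne_i] := eqVneq i (sl e).
  by rewrite eq_i (spos_slen w_ok) /model_spos leqnn gtn_eqF // -eq_i.
(* interior vertices of alpha(e) are stored under whichever of [e], [einv e]
   is positively labelled *)
wlog pos_e : e i le_i i_gt0 ne_i sl_le3 / (lab e).2.
  move=> gen; case: (boolP (lab e).2) => [|neg_e]; first exact: gen.
  rewrite -(spos_einv wfS w_ok le_i) -(model_spos_einv le_i).
  by apply: gen; rewrite ?(slen_einv wfS w_ok) ?(lab_einv wfS) //=; lia.
have [|v [-> val_v]] := spos_ivtxP w_ok (i := i) pos_e; first lia.
by rewrite /= val_v /= inordK //; lia.
Qed.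

Lemma model_emap_subst_edge e i (lt_i : i < sl e) :
  model_emap (subst_edge w_ok lt_i) = model_sedge e i.
Proof.
have [_ sl_le3 _] := w_ok (lab e).
by rewrite /model_emap /= inordK // (leq_trans lt_i sl_le3).
Qed.

Lemma orig_model_sedge e i : i < sl e -> model_orig (model_sedge e i) = model_spos e i.
Proof.
rewrite /model_sedge /model_spos slen_wh_word /wh_prefix; case: eqP => [lb|_].
  have lA : (lab e \in A) = false by apply: (b_notin_A A_not_b); rewrite lb.
  by rewrite lA; case: i => //= _; rewrite lA.
case lA: (lab e \in A); case: (linv (lab e) \in A);
  case: i => [|[|[|i]]] //=; rewrite ?lA ?orig_model_b_edge ?orig_model_b_edge_inv //.
Qed.

Lemma lab_model_sedge e i : i < sl e ->
  model_lab (model_sedge e i) = nth (lab e) (w (lab e)) i.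
Proof.
rewrite /model_sedge slen_wh_word /wh_word /wh_prefix; case: eqP => [lb|_].
  have lA : (lab e \in A) = false by apply: (b_notin_A A_not_b); rewrite lb.
  by rewrite lA; case: i.
case: (lab e \in A); case: (linv (lab e) \in A);
  case: i => [|[|[|i]]] //=; rewrite ?lab_model_b_edge ?lab_model_b_edge_inv //.
Qed.

Lemma model_einvK : involutive model_einv.
Proof. by case=> [e|[u s]] /=; rewrite ?(einvK wfS) ?negbK. Qed.

Lemma einv_model_sedge e i : i < sl e ->
  model_einv (model_sedge e i) = model_sedge (einv e) (sl e - i).-1.
Proof.
rewrite /model_sedge wh_prefix_einv (term_einv wfS) slen_wh_word /wh_prefix; case: eqP => [lb|_].
  have lA : (lab e \in A) = false by apply: (b_notin_A A_not_b); rewrite lb.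
  have lA' : (linv (lab e) \in A) = false by apply: (b_notin_A A_not_b); rewrite /= lb.
  by rewrite lA lA'; case: i.
case: (lab e \in A); case: (linv (lab e) \in A);
  case: i => [|[|[|i]]] //=; rewrite ?model_einvK //.
Qed.

Lemma wh_model_morphism :
  is_morphism (G := wh_graph b A S) (H := wh_model) model_vmap model_emap.
Proof.
split; [|split]; apply: (subst_edge_ind (w_ok := w_ok)) => e i lt_i.
- rewrite [X in model_vmap X](orig_subst_edge w_ok lt_i) (model_vmap_spos (ltnW lt_i)).
  by rewrite model_emap_subst_edge -orig_model_sedge.
- have lt_j : (sl e - i).-1 < slen w (einv e) by rewrite (slen_einv wfS w_ok); lia.
  rewrite [X in model_emap X](einv_subst_edge wfS w_ok lt_i lt_j) !model_emap_subst_edge.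
  by rewrite -einv_model_sedge.
- by rewrite [RHS](lab_subst_edge w_ok) model_emap_subst_edge -lab_model_sedge.
Qed.

Lemma model_bconn x y :
  bconn b wh_model x y -> bconn b S (model_base x) (model_base y).
Proof.
apply: homo_connect => {}x {}y /existsP [[e|[u s]] /and3P [/eqP <- /eqP <- /= eb]].
  rewrite /term /= !(b_notin_A A_not_b) ?(lab_einv wfS) //.
  by apply/connect1/existsP; exists e; rewrite eb !eqxx.
by rewrite /term !model_base_orig_inr connect0.
Qed.

Local Notation G := (wh_graph b A S).

Definition letter_edge e : edg G := subst_edge w_ok (wh_prefix_lt A_not_b (lab e)).

Lemma lab_letter_edge e : lab (letter_edge e) = lab e.
Proof. by rewrite lab_subst_edge nth_wh_word_prefix. Qed.

Lemma letter_edgeP (s : edg G) :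
  (lab s).1 != b -> (lab (sbase s)).1 != b /\ s = letter_edge (sbase s).
Proof.
move: s; apply: (subst_edge_ind (w_ok := w_ok)) => e i lt_i.
rewrite lab_subst_edge nth_wh_word_b // negb_or negbK => /andP [eb /eqP eq_i].
by split=> //; apply: eq_subst_edge.
Qed.

Lemma einv_letter_edge e : (lab e).1 != b -> einv (letter_edge e) = letter_edge (einv e).
Proof.
move=> eb; have lt_j : (sl e - pre e).-1 < sl (einv e).
  by rewrite (slen_einv wfS w_ok) slen_wh_word (negPf eb); lia.
rewrite (einv_subst_edge wfS w_ok _ lt_j); apply: eq_subst_edge.
by rewrite wh_prefix_einv slen_wh_word (negPf eb); lia.
Qed.

Lemma model_emap_letter_edge e : model_emap (letter_edge e) = inl e.
Proof. by rewrite model_emap_subst_edge /model_sedge eqxx. Qed.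

Lemma orig_letter_edge_bconn e :
  (lab e).1 != b -> bconn b G (orig (letter_edge e)) (inl (orig e)).
Proof.
move=> eb; rewrite orig_subst_edge.
have pre_le1 := wh_prefix_le1 A (lab e); have suf_le1 := wh_prefix_le1 A (linv (lab e)).
have := slen_wh_word e; rewrite (negPf eb) => sl_e.
case: (posnP (pre e)) => [->|pre_gt0]; first exact: connect0.
have lt_j : sl e - 1 < sl (einv e) by rewrite (slen_einv wfS w_ok); lia.
have pre1 : pre e = 1 by lia.
have := subst_edge_badjacent wfS w_ok lt_j (b := b).
have -> : (sl e - 1).+1 = sl e - 0 by lia.
rewrite (spos_einv wfS w_ok (i := 1)) ?(spos_einv wfS w_ok (i := 0)) ?pre1; try lia.
move=> badj; apply/connect1/badj.
by rewrite (nth_wh_word_b lt_j) (lab_einv wfS) /= (negPf eb); lia.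
Qed.

Lemma lift_bconn u v : bconn b S u v -> bconn b G (inl u) (inl v).
Proof.
apply: (homo_connect (h := fun u => inl u : svtx 2 w S)).
move=> _ _ /existsP [e /and3P [/eqP <- /eqP <- eb]].
have sl1 : sl e = 1 by rewrite slen_wh_word eb.
have lt0 : 0 < sl e by rewrite sl1.
have := subst_edge_badjacent wfS w_ok lt0 (b := b).
have := spos_slen w_ok e; rewrite sl1 => -> badj; apply/connect1/badj.
by rewrite (nth_wh_word_b lt0) eb.
Qed.

Lemma subst_vtx_bconn (x : vtx G) : exists u, bconn b G (inl u) x.
Proof.
case: x => [u|v]; first by exists u; apply: connect0.
rewrite -(spos_ivtx v); case: v => [[e i] /= /and3P [_ i_gt0 lt_i]].
rewrite -/(sl e) in lt_i.
have pre_le1 := wh_prefix_le1 A (lab e); have suf_le1 := wh_prefix_le1 A (linv (lab e)).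
have := slen_wh_word e; case: ifP => [_|/negbT eb] sl_e; first lia.
have lt0 e' : (lab e').1 != b -> 0 < sl e' by move=> e'b; rewrite slen_wh_word (negPf e'b).
(* the vertex ends the leading b-edge of alpha(e) or starts the trailing one *)
case: (boolP ((i == 1 :> nat) && (pre e == 1))) => [/andP [/eqP i1 /eqP pre1] | not_first].
  exists (orig e); have := subst_edge_badjacent wfS w_ok (lt0 e eb) (b := b).
  rewrite i1 => badj; apply/connect1/badj.
  by rewrite (nth_wh_word_b (lt0 e eb)) pre1 orbT.
have einv_b : (lab (einv e)).1 != b by rewrite (lab_einv wfS).
exists (term e); have := subst_edge_badjacent wfS w_ok (lt0 _ einv_b) (b := b).
have -> : pos (einv e) 1 = pos e i.
  by rewrite -(spos_einv wfS w_ok (ltnW lt_i)); congr spos; move: not_first; lia.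
move=> badj; apply/connect1/badj.
by rewrite (nth_wh_word_b (lt0 _ einv_b)) wh_prefix_einv; move: not_first; lia.
Qed.

End WhiteheadModel.

Theorem lemma9p7 (B : finType) (Sigma : lgraph B) (n : nat)
    (comp : vtx Sigma -> 'I_n) (b : B) (A : {set B * bool}) :
  (* Sigma is the disjoint union of the sequence Sigma_0, ..., Sigma_{n-1}:
     comp v = index of the component containing v; each component is a
     nonempty connected finite tight labeled graph *)
  wf Sigma -> tight Sigma ->
  (forall e : edg Sigma, comp (orig e) = comp (term e)) ->
  (forall i : 'I_n, exists v, comp v = i) ->
  (forall u v, comp u = comp v -> connect (adjacent Sigma) u v) ->
  (* alpha is the elementary Whitehead automorphism given by b and A *)
  (forall x, x \in A -> x.1 != b) ->
  (* the path alpha(e) contains exactly one subedge labeled c = lab e *)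
  (forall e : edg Sigma, (lab e).1 != b ->
     exists! s : edg (wh_graph b A Sigma), sbase s = e /\ lab s = lab e) /\
  (* for tight(alpha Sigma) with its quotient map (qv, qe) *)
  (forall (H : lgraph B) (qv : vtx (wh_graph b A Sigma) -> vtx H)
          (qe : edg (wh_graph b A Sigma) -> edg H),
     folds qv qe -> tight H ->
     exists f : edg Sigma -> edg H,
       (* f e = e' is the image of that subedge *)
       (forall e, (lab e).1 != b ->
          exists s : edg (wh_graph b A Sigma),
            [/\ sbase s = e, lab s = lab e & f e = qe s]) /\
       (* bijection between edges not labeled b^{+-1} *)
       {in [pred e | (lab e).1 != b] &, injective f} /\
       (forall e, (lab e).1 != b -> (lab (f e)).1 != b) /\
       (forall e', (lab e').1 != b -> exists e, (lab e).1 != b /\ f e = e') /\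
       (* isomorphism of the graphs obtained by collapsing b^{+-1}-edges:
          the vertex map [v] |-> [qv v] is well defined and bijective on
          b-components, and it is compatible with f on incidence/inversion *)
       (forall u v, bconn b Sigma u v ->
          bconn b H (qv (sbase_vtx _ _ u)) (qv (sbase_vtx _ _ v))) /\
       (forall u v, bconn b H (qv (sbase_vtx _ _ u)) (qv (sbase_vtx _ _ v)) ->
          bconn b Sigma u v) /\
       (forall y : vtx H, exists u, bconn b H (qv (sbase_vtx _ _ u)) y) /\
       (forall e, (lab e).1 != b ->
          bconn b H (orig (f e)) (qv (sbase_vtx _ _ (orig e))) /\
          f (einv e) = einv (f e))).
Proof.
move=> wfS tS _ _ _ A_not_b; pose ledge := letter_edge (S := Sigma) A_not_b.
split=> [e eb | H qv qe qf tH].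
  exists (ledge e); split=> [|s [se ls]]; first by rewrite lab_letter_edge.
  have sb : (lab s).1 != b by rewrite ls.
  by have [_ ->] := letter_edgeP A_not_b sb; rewrite se.
have qM := folds_morphism qf; have [qo [qi ql]] := qM.
have [qv_onto qe_onto] := folds_onto qf.
have [rv [re [rM rvE reE]]] := folds_factor qf (wh_model_tight wfS tS A_not_b)
  (wh_model_morphism wfS A_not_b).
exists (fun e => qe (ledge e)); split; [|split; [|split; [|split; [|split; [|split; [|split]]]]]].
- by move=> e eb; exists (ledge e); rewrite lab_letter_edge.
- by move=> e1 e2 _ _ /(congr1 re); rewrite !reE !model_emap_letter_edge => -[].
- by move=> e eb; rewrite ql lab_letter_edge.
- move=> e' e'b; have [s es] := qe_onto e'; rewrite -es ql in e'b.
  have [sb s_eq] := letter_edgeP A_not_b e'b.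
  by exists (sbase s); rewrite -es [in RHS]s_eq.
- by move=> u v /(lift_bconn A wfS) /(morphism_bconn qM).
- by move=> u v /(morphism_bconn rM); rewrite !rvE => /(model_bconn wfS A_not_b).
- move=> y; have [x <-] := qv_onto y; have [u ux] := subst_vtx_bconn (A := A) wfS x.
  by exists u; apply: morphism_bconn qM _ _ ux.
- move=> e eb; rewrite -qo -qi einv_letter_edge //; split=> //.
  exact: morphism_bconn qM _ _ (orig_letter_edge_bconn wfS A_not_b eb).
Qed.
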